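(* Let $R=\mathbb{Z}[x_1,\dots,x_n]$ or $R=\mathbb{Z}[[x_1,\dots,x_n]]$, and fix $i\in\{1,\dots,n\}$. For every $f\in R$ and every positive integer $m$, \[\sum_{\ell=0}^{m}(\ell-1)\,D_{\ell,i}(f)\,D_{m-\ell,i}(f^{m-1})=0 .\] The same identity holds with $\mathbb{Z}$ replaced by any field $k$ of characteristic $p>0$ (with the operators reduced mod $p$).
   Context: For $m\ge 0$, $D_{m,i}:R\to R$ is the map that is linear over $\mathbb{Z}[x_1,\dots,x_{i-1},x_{i+1},\dots,x_n]$ (resp. over $\mathbb{Z}[[x_1,\dots,x_{i-1},x_{i+1},\dots,x_n]]$, and compatible with infinite sums in the power series case) and sends $x_i^{\ell}$ to $\binom{\ell}{m}x_i^{\ell-m}$ (which is $0$ when $\ell<m$); $D_{0,i}$ is the identity. Formally $D_{m,i}=\frac{1}{m!}\frac{\partial^m}{\partial x_i^m}$. Over a field $k$ of characteristic $p$, $D_{m,i}$ is defined by the same formula on $k[x_1,\dots,x_n]$ or $k[[x_1,\dots,x_n]]$. *)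

From HB Require Import structures.
From mathcomp Require Import all_boot all_order all_algebra.
Set Implicit Arguments. Unset Strict Implicit. Unset Printing Implicit Defensive.
Import Order.TTheory GRing.Theory Num.Theory.
Local Open Scope ring_scope.

(* exponent vectors (monomials) x^c = prod_j x_j^(c j) *)
Definition mono (n : nat) := {ffun 'I_n -> nat}.

Definition mseries (K : comNzRingType) (n : nat) := mono n -> K.

Definition mdeg n (c : mono n) : nat := (\sum_(j < n) c j)%N.

Definition mlow n N (b : {ffun 'I_n -> 'I_N}) : mono n := [ffun j => nat_of_ord (b j)].

Definition msubm n (c b : mono n) : mono n := [ffun j => (c j - b j)%N].

(* Cauchy product: (f*g)_c = sum_{b <= c} f_b g_{c-b} *)
Definition mmul (K : comNzRingType) n (f g : mseries K n) : mseries K n :=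
  fun c => \sum_(b : {ffun 'I_n -> 'I_(mdeg c).+1} | [forall j, mlow b j <= c j]%N)
             f (mlow b) * g (msubm c (mlow b)).

Definition mone (K : comNzRingType) n : mseries K n :=
  fun c => if c == [ffun=> 0%N] then 1 else 0.

Definition mpow (K : comNzRingType) n (f : mseries K n) (k : nat) : mseries K n :=
  iter k (mmul f) (@mone K n).

(* D_{m,i} : x_i^l |-> binom(l,m) x_i^(l-m), linear over the other variables:
   coefficient of x^c in D_{m,i} f is binom(c_i + m, m) * (coef of x^(c + m e_i) in f) *)
Definition Dop (K : comNzRingType) n (m : nat) (i : 'I_n) (f : mseries K n) : mseries K n :=
  fun c => ('C(c i + m, m))%:R *
           f [ffun j => if j == i then (c j + m)%N else c j].

Definition identity_sum (K : comNzRingType) n (i : 'I_n) (f : mseries K n) (m : nat)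
  : mseries K n :=
  fun c => \sum_(l < m.+1)
     ((l%:R - 1) * mmul (Dop l i f) (Dop (m - l) i (mpow f (m - 1))) c).

(* Over a ring without additive torsion the identity follows from
   [m D_m(f^m) = m * sum_l l D_l(f) D_(m-l)(f^(m-1))], because
   [sum_l D_l(f) D_(m-l)(f^(m-1)) = D_m(f^m)] by the Leibniz rule.  That weighted identity is a
   divided-power form of [(f^m)' = m f' f^(m-1)] and follows from the Leibniz rule by
   induction on the exponent.  A coefficient of the left-hand side is an integer polynomial in
   finitely many coefficients of [f], so the general case follows by specialising the
   torsion-free ring of integer polynomials in as many variables. *)

From Stdlib Require Import FunctionalExtensionality.
From HB Require Import structures.
From mathcomp Require Import all_boot all_order all_algebra zify.
Set Implicit Arguments. Unset Strict Implicit. Unset Printing Implicit Defensive.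
Import GRing.Theory.
Local Open Scope ring_scope.

Lemma sum_triangle (V : nmodType) N (F : nat -> nat -> V) :
  \sum_(j < N.+1) \sum_(l < (N - j).+1) F j l = \sum_(l < N.+1) \sum_(j < (N - l).+1) F j l.
Proof.
have square (G : nat -> nat -> V) : \sum_(j < N.+1) \sum_(l < (N - j).+1) G j l =
    \sum_(j < N.+1) \sum_(l < N.+1) (if (j + l <= N)%N then G j l else 0).
  apply: eq_bigr => j _; rewrite (big_ord_widen N.+1) ?ltnS ?leq_subr // big_mkcond.
  by apply: eq_bigr => l _; rewrite ltnS leq_subRL // -ltnS.
rewrite square (square (fun l j => F j l)) exchange_big /=.
by apply: eq_bigr => l _; apply: eq_bigr => j _; rewrite addnC.
Qed.

Section Monomials.

Variable n : nat.
Implicit Types a b c d e s : mono n.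

Definition mle a b : bool := [forall j, a j <= b j]%N.

Definition madd a b : mono n := [ffun j => (a j + b j)%N].

Definition mX (i : 'I_n) (l : nat) : mono n := [ffun j => if j == i then l else 0%N].

Definition mshift (i : 'I_n) c (l : nat) : mono n :=
  [ffun j => if j == i then (c j + l)%N else c j].

Definition mbox c : seq (mono n) :=
  [seq mlow x | x <- index_enum {ffun 'I_n -> 'I_(mdeg c).+1} & [forall j, mlow x j <= c j]%N].

Lemma mleP a b : reflect (forall j, a j <= b j)%N (mle a b).
Proof. exact: forallP. Qed.

Lemma mle_refl c : mle c c.
Proof. exact/mleP. Qed.

Lemma mle_trans {a b c} : mle a b -> mle b c -> mle a c.
Proof. by move=> /mleP ab /mleP bc; apply/mleP=> j; apply: leq_trans (ab j) (bc j). Qed.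

Lemma mle_msubm c a : mle (msubm c a) c.
Proof. by apply/mleP=> j; rewrite ffunE leq_subr. Qed.

Lemma mshiftE i c l : mshift i c l = madd c (mX i l).
Proof. by apply/ffunP=> j; rewrite !ffunE; case: eqP; rewrite ?addn0. Qed.

Lemma mle_mshift i d c l l' : mle d c -> (l <= l')%N -> mle (mshift i d l) (mshift i c l').
Proof. by move=> /mleP dc ll'; apply/mleP=> j; rewrite !ffunE; case: eqP; rewrite ?leq_add. Qed.

Lemma leq_mdeg c j : (c j <= mdeg c)%N.
Proof. by rewrite /mdeg (bigD1 j) //= leq_addr. Qed.

Lemma mlow_inj N : injective (@mlow n N).
Proof.
move=> b b' /ffunP bb'; apply/ffunP=> j; apply: ord_inj.
by have := bb' j; rewrite !ffunE.
Qed.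

Lemma mem_mbox c d : (d \in mbox c) = mle d c.
Proof.
apply/idP/idP => [/mapP[b] | /mleP dc].
  by rewrite mem_filter => /andP[? _] ->.
have d_small j : (d j < (mdeg c).+1)%N by rewrite ltnS (leq_trans (dc j)) ?leq_mdeg.
apply/mapP; exists [ffun j => Ordinal (d_small j)]; last by apply/ffunP=> j; rewrite !ffunE.
by rewrite mem_filter mem_index_enum andbT; apply/forallP=> j; rewrite !ffunE dc.
Qed.

Lemma mbox_uniq c : uniq (mbox c).
Proof. by rewrite map_inj_uniq ?filter_uniq ?index_enum_uniq //; apply: mlow_inj. Qed.

Section BigMbox.

Variable K : comNzRingType.
Implicit Type G : mono n -> K.

Lemma perm_mbox c (t : seq (mono n)) : uniq t -> mbox c =i t -> perm_eq (mbox c) t.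
Proof. by move=> ut; apply: uniq_perm; rewrite ?mbox_uniq. Qed.

Lemma big_mbox_msubm c G :
  \sum_(a <- mbox c) G a = \sum_(a <- mbox c) G (msubm c a).
Proof.
have msubmK a : mle a c -> msubm c (msubm c a) = a.
  by move=> /mleP ac; apply/ffunP=> j; rewrite !ffunE subKn.
rewrite -(big_map (msubm c) xpredT G); apply: perm_big; apply: perm_mbox.
  rewrite map_inj_in_uniq ?mbox_uniq // => a b.
  by rewrite !mem_mbox => /msubmK {2}<- /msubmK {2}<- ->.
move=> d; rewrite mem_mbox; apply/idP/mapP => [dc | [a _ ->]]; last exact: mle_msubm.
by exists (msubm c d); rewrite ?mem_mbox ?mle_msubm ?msubmK.
Qed.

Lemma big_mbox_madd d s G :
  \sum_(e <- mbox d) G (madd e s) = \sum_(b <- mbox (madd d s) | mle s b) G b.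
Proof.
rewrite -(big_map (madd^~ s) xpredT G) -[RHS]big_filter; apply: perm_big.
apply: uniq_perm; rewrite ?filter_uniq ?mbox_uniq //.
  rewrite map_inj_uniq ?mbox_uniq // => a b /ffunP ab; apply/ffunP=> j.
  by have := ab j; rewrite !ffunE => /addIn.
move=> b; rewrite mem_filter mem_mbox; apply/mapP/andP => [[e] | [/mleP sb /mleP bds]].
  rewrite mem_mbox => /mleP ed ->.
  by split; apply/mleP=> j; rewrite !ffunE ?leq_addl ?leq_add2r.
exists (msubm b s); last by apply/ffunP=> j; rewrite !ffunE subnK.
by rewrite mem_mbox; apply/mleP=> j; have := bds j; rewrite !ffunE; lia.
Qed.

Lemma big_mbox_mle b c G :
  mle b c -> \sum_(a <- mbox b) G a = \sum_(a <- mbox c | mle a b) G a.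
Proof.
move=> bc; rewrite -[RHS]big_filter; apply: perm_big; apply: perm_mbox.
  by rewrite filter_uniq ?mbox_uniq.
move=> a; rewrite mem_filter !mem_mbox.
by case ab: (mle a b); rewrite //= (mle_trans ab bc).
Qed.

End BigMbox.

End Monomials.

Section SeriesAlgebra.

Variables (K : comNzRingType) (n : nat).
Implicit Types (f g h : mseries K n) (c : mono n).

Lemma mmulE f g c : mmul f g c = \sum_(a <- mbox c) f a * g (msubm c a).
Proof. by rewrite big_map big_filter. Qed.

Lemma mmulC f g : mmul f g = mmul g f.
Proof.
apply: functional_extensionality => c; rewrite !mmulE big_mbox_msubm.
apply: eq_big_seq => a; rewrite mem_mbox => /mleP ac; rewrite mulrC; congr (g _ * _).
by apply/ffunP=> j; rewrite !ffunE subKn.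
Qed.

Lemma mmulA f g h : mmul f (mmul g h) = mmul (mmul f g) h.
Proof.
apply: functional_extensionality => c; rewrite !mmulE.
transitivity (\sum_(b <- mbox c) \sum_(a <- mbox c | mle a b)
                f a * g (msubm b a) * h (msubm c b)); last first.
  apply: eq_big_seq => b; rewrite mem_mbox => bc.
  by rewrite mmulE big_distrl (big_mbox_mle _ bc).
rewrite (exchange_big_dep xpredT) //=; apply: eq_big_seq => a; rewrite mem_mbox => /mleP ac.
have cE : madd (msubm c a) a = c by apply/ffunP=> j; rewrite !ffunE subnK.
rewrite -[X in mbox X]cE -big_mbox_madd mmulE big_distrr /=; apply: eq_bigr => e _.
rewrite mulrA; congr (_ * g _ * h _); apply/ffunP=> j; rewrite !ffunE.
  by rewrite addnK.
by rewrite addnC subnDA.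
Qed.

Lemma mmulCA f g h : mmul f (mmul g h) = mmul g (mmul f h).
Proof. by rewrite mmulA (mmulC f g) -mmulA. Qed.

Lemma mmul_sumr f (N : nat) (G : nat -> mseries K n) c :
  mmul f (fun d => \sum_(l < N) G l d) c = \sum_(l < N) mmul f (G l) c.
Proof.
rewrite mmulE (eq_bigr (fun a => \sum_(l < N) f a * G l (msubm c a))); last first.
  by move=> a _; rewrite big_distrr.
by rewrite exchange_big; apply: eq_bigr => l _; rewrite mmulE.
Qed.

Lemma mmulZr f g (x : K) c : mmul f (fun d => x * g d) c = x * mmul f g c.
Proof. by rewrite !mmulE big_distrr; apply: eq_bigr => a _; rewrite mulrCA. Qed.

Lemma mmul0r f c : mmul f (fun _ => 0) c = 0.
Proof. by rewrite mmulE big1 // => a _; rewrite mulr0. Qed.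

Lemma Dop_mone l (i : 'I_n) : (0 < l)%N -> Dop l i (@mone K n) = fun _ => 0.
Proof.
move=> l_gt0; apply: functional_extensionality => c; rewrite /Dop /mone.
case: eqP => [/ffunP/(_ i)|]; last by rewrite mulr0.
by rewrite !ffunE eqxx; lia.
Qed.

Lemma Dop_mmul k (i : 'I_n) f g c :
  Dop k i (mmul f g) c = \sum_(l < k.+1) mmul (Dop l i f) (Dop (k - l) i g) c.
Proof.
set c' := mshift i c k; have c'i : c' i = (c i + k)%N by rewrite ffunE eqxx.
pose H l (a : mono n) := ('C(a i, l) * 'C(c' i - a i, k - l))%:R * (f a * g (msubm c' a)).
have -> : Dop k i (mmul f g) c = \sum_(l < k.+1) \sum_(a <- mbox c') H l a.
  rewrite exchange_big /Dop -/c' mmulE big_distrr /=.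
  apply: eq_big_seq => a; rewrite mem_mbox => /mleP ac'.
  by rewrite -mulr_suml -natr_sum binomial.Vandermonde subnKC ?ac' ?c'i.
apply: eq_bigr => l _; have lk : (l <= k)%N by rewrite -ltnS.
rewrite mmulE; set u := mX i l.
(* The reindexing [a |-> a + l e_i] misses only terms of [H l] with a vanishing binomial. *)
transitivity (\sum_(a <- mbox c) H l (madd a u)); last first.
  apply: eq_big_seq => a; rewrite mem_mbox => /mleP ac.
  have subE : msubm c' (madd a u) = mshift i (msubm c a) (k - l).
    by apply/ffunP=> j; rewrite !ffunE; case: eqP => [->|]; rewrite ?addn0 //; have := ac i; lia.
  rewrite /H /Dop subE -mshiftE !ffunE !eqxx /= !natrM mulrACA.
  by rewrite subnDA -addnBAC ?ac // addnBA.
have cuc' : mle (madd c u) c'.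
  by apply/mleP=> j; rewrite !ffunE; case: (j == i); rewrite ?addn0 ?leq_add2l.
symmetry; rewrite big_mbox_madd big_mkcond (big_mbox_mle _ cuc') big_mkcond /=.
apply: eq_big_seq => b; rewrite mem_mbox => /mleP bc'.
have bic' := bc' i; rewrite c'i in bic'.
have [lb|bl] := leqP l (b i); last by rewrite /H bin_small // mul0n mul0r !if_same.
have [bcl|cbl] := leqP (b i) (c i + l); last first.
  rewrite /H (bin_small (n := (c' i - b i)%N)) ?muln0 ?mul0r ?if_same // c'i.
  by move: (b i) cbl bic' => bi; lia.
have -> : mle b (madd c u).
  apply/mleP=> j; rewrite !ffunE; case: eqP => [->|/eqP ji] //; rewrite addn0.
  by have := bc' j; rewrite ffunE (negbTE ji).
by have -> : mle u b by apply/mleP=> j; rewrite !ffunE; case: eqP => [->|].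
Qed.

(* The analogue of [(f^(k+1))' = (k+1) f' f^k] for the divided powers [Dop N]: in the
   expansion of [N * Dop N (f^(k+1))] by the Leibniz rule, each of the [k+1] factors
   carries on average [1/(k+1)] of the total weight [N]. *)
Lemma Dop_mpowS_weighted (i : 'I_n) f k N c :
  N%:R * Dop N i (mpow f k.+1) c =
  k.+1%:R * \sum_(j < N.+1) j%:R * mmul (Dop j i f) (Dop (N - j) i (mpow f k)) c.
Proof.
elim: k N c => [|k IHk] N c.
  rewrite [mpow f 1]/= Dop_mmul !big_ord_recr /= !big1 ?add0r ?mul1r // => j _;
    by rewrite Dop_mone ?mmul0r ?mulr0 // subn_gt0.
set P := mpow f k.+1; set Q := mpow f k.
pose F j l := l%:R * mmul (Dop l i f) (mmul (Dop j i f) (Dop (N - j - l) i Q)) c.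
set T := \sum_(j < N.+1) \sum_(l < (N - j).+1) F j l.
have DopP M : Dop M i P = fun d => \sum_(j < M.+1) mmul (Dop j i f) (Dop (M - j) i Q) d.
  by apply: functional_extensionality => d; rewrite Dop_mmul.
have weight_left : \sum_(j < N.+1) j%:R * mmul (Dop j i f) (Dop (N - j) i P) c = T.
  rewrite /T sum_triangle; apply: eq_bigr => l _.
  rewrite DopP (mmul_sumr _ _ (fun j => mmul (Dop j i f) (Dop (N - l - j) i Q))) mulr_sumr.
  by apply: eq_bigr => j _; rewrite /F subnAC.
have weight_right :
    \sum_(j < N.+1) (N - j)%:R * mmul (Dop j i f) (Dop (N - j) i P) c = k.+1%:R * T.
  rewrite /T mulr_sumr; apply: eq_bigr => j _.
  rewrite -mmulZr (_ : (fun d => _) = fun d => k.+1%:R *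
      \sum_(l < (N - j).+1) l%:R * mmul (Dop l i f) (Dop (N - j - l) i Q) d); last first.
    by apply: functional_extensionality => d; rewrite IHk.
  rewrite mmulZr (mmul_sumr _ _ (fun l d => l%:R * mmul (Dop l i f) (Dop (N - j - l) i Q) d)).
  congr (_ * _); apply: eq_bigr => l _.
  by rewrite mmulZr mmulCA.
rewrite [mpow f k.+2]/= -/P Dop_mmul mulr_sumr.
under eq_bigr => j _ do rewrite -[N in N%:R](subnKC (ltnSE (ltn_ord j))) natrD mulrDl.
by rewrite big_split /= weight_left weight_right -[k.+2%:R]natr1 mulrDl mul1r addrC.
Qed.

End SeriesAlgebra.

Lemma identity_sum_eq0_natr_reg (K : comNzRingType)
    (natr_reg : forall m (x : K), (0 < m)%N -> m%:R * x = 0 -> x = 0)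
    n (i : 'I_n) (f : mseries K n) m c :
  (0 < m)%N -> identity_sum i f m c = 0.
Proof.
case: m => // k _.
have DopE : Dop k.+1 i (mpow f k.+1) c =
    \sum_(l < k.+2) l%:R * mmul (Dop l i f) (Dop (k.+1 - l) i (mpow f k)) c.
  apply/eqP; rewrite -subr_eq0; apply/eqP; apply: (natr_reg k.+1) => //.
  by rewrite mulrBr Dop_mpowS_weighted subrr.
rewrite /identity_sum subn1 /=.
under eq_bigr => l _ do rewrite mulrBl mul1r.
by rewrite sumrB -DopE -Dop_mmul subrr.
Qed.

Section RingMorphisms.

Variables (A B : comNzRingType) (phi : {rmorphism A -> B}) (n : nat).
Implicit Types (f g : mseries A n) (c : mono n).

Lemma rmorph_mmul f g c : phi (mmul f g c) = mmul (phi \o f) (phi \o g) c.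
Proof. by rewrite rmorph_sum; apply: eq_bigr => b _; rewrite rmorphM. Qed.

Lemma rmorph_Dop l (i : 'I_n) f : phi \o Dop l i f = Dop l i (phi \o f).
Proof. by apply: functional_extensionality => d; rewrite /= rmorphM rmorph_nat. Qed.

Lemma rmorph_mpow f k : phi \o mpow f k = mpow (phi \o f) k.
Proof.
apply: functional_extensionality => d; elim: k d => [|k IHk] d /=.
  by rewrite /mone; case: ifP; rewrite ?rmorph1 ?rmorph0.
by rewrite rmorph_mmul; congr mmul; apply: functional_extensionality.
Qed.

Lemma rmorph_identity_sum (i : 'I_n) f m c :
  phi (identity_sum i f m c) = identity_sum i (phi \o f) m c.
Proof.
rewrite rmorph_sum; apply: eq_bigr => l _.
by rewrite rmorphM rmorphB rmorph_nat rmorph1 rmorph_mmul !rmorph_Dop rmorph_mpow.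
Qed.

End RingMorphisms.

Section Locality.

Variables (K : comNzRingType) (n : nat).
Implicit Types (f g : mseries K n) (c : mono n).

Definition eq_below c f f' := forall d, mle d c -> f d = f' d.

Lemma eq_below_trans c c' f f' : mle c' c -> eq_below c f f' -> eq_below c' f f'.
Proof. by move=> c'c ff' d dc'; apply: ff'; apply: mle_trans dc' c'c. Qed.

Lemma eq_below_mmul c f f' g g' :
  eq_below c f f' -> eq_below c g g' -> eq_below c (mmul f g) (mmul f' g').
Proof.
move=> ff' gg' d dc; rewrite !mmulE; apply: eq_big_seq => a; rewrite mem_mbox => ad.
by rewrite ff' ?gg' ?(mle_trans (mle_msubm _ _)) ?(mle_trans ad).
Qed.

Lemma eq_below_Dop c l (i : 'I_n) f f' :
  eq_below (mshift i c l) f f' -> eq_below c (Dop l i f) (Dop l i f').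
Proof. by move=> ff' d dc; rewrite /Dop ff' ?mle_mshift. Qed.

Lemma eq_below_mpow c f f' k : eq_below c f f' -> eq_below c (mpow f k) (mpow f' k).
Proof. by move=> ff'; elim: k => [|k IHk] //=; apply: eq_below_mmul. Qed.

Lemma eq_identity_sum_below (i : 'I_n) f f' m c :
  eq_below (mshift i c m) f f' -> identity_sum i f m c = identity_sum i f' m c.
Proof.
move=> ff'; apply: eq_bigr => l _; have lm : (l <= m)%N by rewrite -ltnS.
congr (_ * _); apply: eq_below_mmul (mle_refl c); apply: eq_below_Dop.
  by apply: eq_below_trans ff'; rewrite mle_mshift ?mle_refl.
by apply: eq_below_mpow; apply: eq_below_trans ff'; rewrite mle_mshift ?mle_refl ?leq_subr.
Qed.

End Locality.

Fixpoint intpoly (N : nat) : idomainType :=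
  if N is N'.+1 then ({poly intpoly N'} : idomainType) else int.

(* [intpoly_var N j] is the variable [X_j] of [intpoly N], or [0] when [N <= j]. *)
Fixpoint intpoly_var (N j : nat) : intpoly N :=
  if N is N'.+1 then if j == N' then 'X else (intpoly_var N' j)%:P else 0.

Fixpoint intpoly_eval (K : comNzRingType) (v : nat -> K) (N : nat) :
    {rmorphism intpoly N -> K} :=
  if N is N'.+1 then
    (horner_morph (fun a => mulrC (v N') (intpoly_eval v N' a))
      : {rmorphism {poly intpoly N'} -> K})
  else intr.

Lemma intpoly_eval_var (K : comNzRingType) (v : nat -> K) N j :
  (j < N)%N -> intpoly_eval v N (intpoly_var N j) = v j.
Proof.
elim: N => // N IHN; rewrite ltnS leq_eqVlt => /orP[/eqP->|jN] /=.
  by rewrite eqxx horner_morphX.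
by rewrite (ltn_eqF jN) horner_morphC IHN.
Qed.

Lemma intpoly_natr_eq0 N m : ((m%:R : intpoly N) == 0) = (m == 0)%N.
Proof.
elim: N => [|N IHN] /=; first by rewrite Num.Theory.pnatr_eq0.
by rewrite -polyC_natr polyC_eq0 IHN.
Qed.

Lemma intpoly_natr_reg N m (x : intpoly N) : (0 < m)%N -> m%:R * x = 0 -> x = 0.
Proof. by rewrite lt0n -(intpoly_natr_eq0 N) => /negbTE m0 /eqP; rewrite mulf_eq0 m0 => /eqP. Qed.

(* Only the finitely many coefficients of [f] below [x^c x_i^m] enter; replacing them by
   independent variables reduces the identity to the torsion-free ring [intpoly N]. *)
Lemma identity_sum_eq0 (K : comNzRingType) n (i : 'I_n) (f : mseries K n) m c :
  (0 < m)%N -> identity_sum i f m c = 0.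
Proof.
move=> m_gt0; set s := mbox (mshift i c m); set N := size s.
pose v j := f (nth c s j).
pose g d : intpoly N := if d \in s then intpoly_var N (index d s) else 0.
have fE : eq_below (mshift i c m) f (intpoly_eval v N \o g).
  move=> d; rewrite -mem_mbox => ds.
  by rewrite /= /g ds intpoly_eval_var ?index_mem // /v nth_index.
rewrite (eq_identity_sum_below fE) -rmorph_identity_sum.
by rewrite (identity_sum_eq0_natr_reg (@intpoly_natr_reg N)) ?rmorph0.
Qed.

(* The identity holds over every commutative ring: the characteristic is irrelevant. *)
Theorem mainTheorem3 :
  (forall (n : nat) (i : 'I_n) (f : mseries int n) (m : nat), (0 < m)%N ->
     forall c : mono n, identity_sum i f m c = 0)
  /\
  (forall (k : fieldType) (p : nat), prime p -> p \in [pchar k] ->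
     forall (n : nat) (i : 'I_n) (f : mseries k n) (m : nat), (0 < m)%N ->
     forall c : mono n, identity_sum i f m c = 0).
Proof.
split=> [n i f m m_gt0 c | k p _ _ n i f m m_gt0 c]; exact: identity_sum_eq0.
Qed.
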